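(* Let $s,k\geq 2$. Then the $s$-stable Kneser graph $\operatorname{KG}(ks+1,k)_{s-\operatorname{stab}}$ is hom-idempotent, i.e., there is a homomorphism from $\operatorname{KG}(ks+1,k)_{s-\operatorname{stab}}\Box\operatorname{KG}(ks+1,k)_{s-\operatorname{stab}}$ to $\operatorname{KG}(ks+1,k)_{s-\operatorname{stab}}$.
   Context: For integers $s,k\geq 2$ and $n\geq ks$, a subset $S\subseteq[n]=\{1,\dots,n\}$ is $s$-stable if $s\leq |i-j|\leq n-s$ for all distinct $i,j\in S$. The $s$-stable Kneser graph $\operatorname{KG}(n,k)_{s-\operatorname{stab}}$ has as vertices the $s$-stable $k$-subsets of $[n]$, two vertices being adjacent iff they are disjoint. $G\Box H$ denotes the cartesian product of graphs (vertex set $V(G)\times V(H)$, $(g,h)\sim(g',h')$ iff one coordinate is equal and the other coordinates are adjacent). A homomorphism is an edge-preserving map between vertex sets. *)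

From mathcomp Require Import all_boot.
Set Implicit Arguments. Unset Strict Implicit. Unset Printing Implicit Defensive.

(* Ground set [n] = {1,...,n} is represented by 'I_n = {0,...,n-1} (shift by one;
   differences |i-j| are unchanged). *)

Definition distn (i j : nat) : nat := maxn i j - minn i j.

Definition s_stable (n s : nat) (S : {set 'I_n}) : bool :=
  [forall i in S, forall j in S,
     (i != j) ==> ((s <= distn i j) && (distn i j <= n - s))].

Definition kg_vertex (n k s : nat) (S : {set 'I_n}) : bool :=
  (#|S| == k) && @s_stable n s S.

Definition KGstab (n k s : nat) : Type := {S : {set 'I_n} | @kg_vertex n k s S}.

Definition kg_adj (n k s : nat) (u v : KGstab n k s) : bool :=
  [disjoint val u & val v].

Definition box_adj (T U : eqType) (eT : rel T) (eU : rel U) (x y : T * U) : bool :=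
  ((x.1 == y.1) && eU x.2 y.2) || ((x.2 == y.2) && eT x.1 y.1).

Definition is_hom (T U : Type) (eT : T -> T -> bool) (eU : U -> U -> bool)
  (f : T -> U) : Prop :=
  forall x y, eT x y -> eU (f x) (f y).

(** Identify the ground set with Z/nZ, n = ks + 1.  A set is s-stable iff
    any two of its distinct elements are at cyclic distance at least s in
    both directions.  The windows {x, ..., x + s - 1} starting at the k
    points of an s-stable k-set are therefore pairwise disjoint and cover
    all of Z/nZ but one point p; walking from p + 1 in steps of s shows that
    the set is the translate p + 1 + P of the progression
    P = {0, s, ..., (k-1)s}.  Writing each vertex as u = c u + P, the map
    (u, v) |-> c u + v equals c u + c v + P, so it is symmetric in u and v,
    and translation by a fixed offset preserves disjointness: it is a
    homomorphism from the square. *)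

From mathcomp Require Import all_boot all_algebra zify.
Set Implicit Arguments. Unset Strict Implicit. Unset Printing Implicit Defensive.
Import GRing.Theory.

Section CyclicGroup.
Local Open Scope ring_scope.

Variable N : nat.
Implicit Types (a x y : 'I_N.+1) (S T : {set 'I_N.+1}).

Lemma val_Zp_sub x y :
  val (y - x) = if (x <= y)%N then (y - x)%N else (N.+1 - (x - y))%N.
Proof.
have -> : val (y - x) = ((y + (N.+1 - x) %% N.+1) %% N.+1)%N by [].
have hx := ltn_ord x; have hy := ltn_ord y.
case: (posnP x) => [->|x_gt0].
  by rewrite subn0 modnn addn0 modn_small // subn0.
rewrite (@modn_small (N.+1 - x)); last lia.
case: ifP => le_xy.
  have -> : (y + (N.+1 - x) = (y - x) + N.+1)%N by lia.
  by rewrite modnDr modn_small //; lia.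
rewrite modn_small; lia.
Qed.

Lemma inZpD m n : inZp (m + n) = inZp m + inZp n :> 'I_N.+1.
Proof. by apply: val_inj; rewrite /= modnDm. Qed.

Lemma val_inZp_sub m n : (m <= n < N.+1)%N ->
  val (inZp n - inZp m : 'I_N.+1) = (n - m)%N.
Proof.
case/andP=> le_mn lt_n; rewrite val_Zp_sub /= !modn_small ?ifT //.
exact: leq_ltn_trans lt_n.
Qed.

Definition spaced (s : nat) S :=
  {in S &, forall x y, x != y -> (s <= val (y - x)%R)%N}.

Lemma distn_stable_Zp s x y : x != y ->
  ((s <= distn x y) && (distn x y <= N.+1 - s))%N =
  ((s <= val (y - x)%R) && (s <= val (x - y)%R))%N.
Proof.
move=> neq_xy; have /negP neq_val : val x != val y by [].
have hx := ltn_ord x; have hy := ltn_ord y.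
rewrite /distn !val_Zp_sub.
by do 2 case: ifP => ?; apply/idP/idP => /andP[? ?]; apply/andP; split; lia.
Qed.

Lemma s_stableP s S : reflect (spaced s S) (s_stable s S).
Proof.
apply: (iffP forall_inP) => [st x y xS yS neq_xy | sp x xS].
  move/forall_inP/(_ y yS)/implyP/(_ neq_xy): (st x xS).
  by rewrite distn_stable_Zp // => /andP[].
apply/forall_inP => y yS; apply/implyP => neq_xy.
by rewrite distn_stable_Zp // !sp // eq_sym.
Qed.

Definition translate a S := [set x + a | x in S].

Lemma card_translate a S : #|translate a S| = #|S|.
Proof. by rewrite card_imset //; apply: addIr. Qed.

Lemma translate_spaced s a S : spaced s S -> spaced s (translate a S).
Proof.
move=> sp _ _ /imsetP[x xS ->] /imsetP[y yS ->] neq.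
rewrite [x + a]addrC addrKA sp //.
by apply: contraNneq neq => ->.
Qed.

Lemma disjoint_translate a S T :
  [disjoint translate a S & translate a T] = [disjoint S & T].
Proof.
rewrite -!setI_eq0 /translate -imsetI ?imset_eq0 //.
by move=> x y _ _; apply: addIr.
Qed.

Lemma translate_comp a b S : translate a (translate b S) = translate (b + a) S.
Proof.
by rewrite /translate -imset_comp; apply: eq_imset => x /=; rewrite addrA.
Qed.

Lemma translate_kg_vertex k s a S : kg_vertex k s S -> kg_vertex k s (translate a S).
Proof.
case/andP=> cardS /s_stableP spS.
by rewrite /kg_vertex card_translate cardS; apply/s_stableP/translate_spaced.
Qed.

End CyclicGroup.

Definition progression k s : {set 'I_(k * s).+1} := [set inZp (j * s) | j : 'I_k].

Lemma card_progression k s : 0 < s -> #|progression k s| = k.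
Proof.
move=> s_gt0; rewrite card_imset ?card_ord // => i j /(congr1 val) /=.
have := ltn_ord i; have := ltn_ord j => lt_jk lt_ik.
rewrite !modn_small; try nia.
by move/eqP; rewrite eqn_pmul2r // => /eqP; apply: val_inj.
Qed.

Section StableSetStructure.
Local Open Scope ring_scope.

Variables k s : nat.
Hypotheses (k_gt0 : (0 < k)%N) (s_gt0 : (0 < s)%N).
Local Notation n := (k * s).+1.

Lemma lt_s_n : (s < n)%N.
Proof. nia. Qed.

Variable V : {set 'I_n}.
Hypotheses (cardV : #|V| = k) (spacedV : spaced s V).

Definition window (xi : 'I_n * 'I_s) : 'I_n := xi.1 + inZp xi.2.

Definition cover := window @: setX V [set: 'I_s].

Lemma window_inj : {in setX V [set: 'I_s] &, injective window}.
Proof.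
have lt_i_n (i : 'I_s) : (i < n)%N by apply: ltn_trans lt_s_n.
have close (x y : 'I_n) (i j : 'I_s) : (j <= i)%N -> x + inZp i = y + inZp j ->
    val (y - x) = (i - j)%N.
  move=> le_ji e; have -> : y - x = inZp i - inZp j.
    by rewrite -[y](addrK (inZp j)) -e addrAC [x + _]addrC addrK.
  by rewrite val_inZp_sub // le_ji lt_i_n.
move=> [x i] [y j]; rewrite !inE /= => /andP[xV _] /andP[yV _]; rewrite /window /=.
move=> e; have [eq_xy | neq_xy] := eqVneq x y.
  move: e; rewrite eq_xy => /addrI /(congr1 val); rewrite /= !modn_small //.
  by move/val_inj ->.
have lt_is := ltn_ord i; have lt_js := ltn_ord j.
have [le_ji | lt_ij] := leqP j i.
  by move: (spacedV xV yV neq_xy); rewrite (close _ _ _ _ le_ji e); lia.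
have neq_yx : y != x by rewrite eq_sym.
by move: (spacedV yV xV neq_yx); rewrite (close _ _ _ _ (ltnW lt_ij) (esym e)); lia.
Qed.

Lemma card_cover : #|cover| = (k * s)%N.
Proof.
by rewrite card_in_imset ?cardsX ?cardsT ?card_ord ?cardV //; exact: window_inj.
Qed.

Lemma cover_misses_one : exists2 p, p \notin cover & forall q, q != p -> q \in cover.
Proof.
have /cards1P[p coverC] : #|~: cover| == 1%N.
  by have := cardsC cover; rewrite card_ord card_cover; lia.
exists p; first by rewrite -in_setC coverC set11.
by move=> q neq_qp; rewrite -[q \in _]negbK -in_setC coverC in_set1 neq_qp.
Qed.

Lemma cover_notin_window q : q \in cover -> q \notin V ->
  exists2 i : 'I_s, (0 < i)%N & q - inZp i \in V.
Proof.
case/imsetP=> [[x i]]; rewrite !inE /window /= => /andP[xV _] ->.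
case: (posnP i) => [i0 | i_gt0]; last by exists i; rewrite ?addrK.
have -> : inZp i = 0 :> 'I_n by apply: val_inj; rewrite /= i0 mod0n.
by rewrite addr0 xV.
Qed.

Lemma gap_succ_in p : p \notin cover -> p + inZp 1 \in cover -> p + inZp 1 \in V.
Proof.
move=> pNcover p1_cover; apply/negPn/negP => p1NV.
have [i i_gt0 xV] := cover_notin_window p1_cover p1NV.
have inZp_i : inZp i = inZp 1 + inZp i.-1 :> 'I_n by rewrite -inZpD add1n prednK.
have lt_i's : (i.-1 < s)%N by have := ltn_ord i; lia.
have : window (p + inZp 1 - inZp i, Ordinal lt_i's) \in cover.
  by apply: imset_f; rewrite !inE xV.
by rewrite /window /= inZp_i opprD addrA addrK addrNK (negbTE pNcover).
Qed.

Lemma spaced_add_s_in y : y \in V -> y + inZp s \in cover -> y + inZp s \in V.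
Proof.
move=> yV ys_cover; apply/negPn/negP => ysNV.
have [i i_gt0 xV] := cover_notin_window ys_cover ysNV.
have lt_sn := lt_s_n; have lt_is := ltn_ord i.
have dist_xy : val (y + inZp s - inZp i - y) = (s - i)%N.
  by rewrite addrAC [y + _]addrC addrK val_inZp_sub // ltnW.
have neq_yx : y != y + inZp s - inZp i.
  apply: contraTneq i_gt0 => /(congr1 (fun x => val (x - y))).
  by rewrite dist_xy subrr /=; lia.
by move: (spacedV yV xV neq_yx); rewrite dist_xy; lia.
Qed.

Lemma progression_after_gap p : p \notin cover ->
  (forall q, q != p -> q \in cover) ->
  forall j, (j < k)%N -> p + inZp (1 + j * s) \in V.
Proof.
move=> pNcover cover_p j.
have in_cover m : (0 < m < n)%N -> p + inZp m \in cover.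
  case/andP=> m_gt0 lt_mn; apply/cover_p; rewrite -subr_eq0 [p + _]addrC addrK.
  by apply: contraTneq m_gt0 => /(congr1 val); rewrite /= modn_small // => ->.
elim: j => [|j IH] lt_jk.
  by rewrite mul0n addn0 gap_succ_in // in_cover //=; nia.
have -> : p + inZp (1 + j.+1 * s) = p + inZp (1 + j * s) + inZp s.
  by rewrite mulSnr addnA inZpD addrA.
rewrite spaced_add_s_in ?IH 1?ltnW // -addrA -inZpD -addnA -mulSnr in_cover //=; nia.
Qed.

Lemma translate_progressionE : exists a, V = translate a (progression k s).
Proof.
have [p pNcover cover_p] := cover_misses_one.
exists (p + inZp 1); apply/eqP; rewrite eq_sym eqEcard card_translate.
rewrite card_progression // cardV leqnn andbT.
apply/subsetP => _ /imsetP[_ /imsetP[j _ ->] ->].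
rewrite addrC -addrA -inZpD.
exact: progression_after_gap.
Qed.

End StableSetStructure.

Lemma kg_vertex_translate_progression k s (S : {set 'I_(k * s).+1}) :
  0 < k -> 0 < s -> kg_vertex k s S ->
  exists a, S = translate a (progression k s).
Proof.
move=> k_gt0 s_gt0 /andP[/eqP cardS /s_stableP spS].
exact: translate_progressionE.
Qed.

Lemma translates_square_hom N k s (P : {set 'I_N.+1}) :
  (forall u : KGstab N.+1 k s, exists a, val u = translate a P) ->
  exists f : KGstab N.+1 k s * KGstab N.+1 k s -> KGstab N.+1 k s,
    is_hom (box_adj (@kg_adj N.+1 k s) (@kg_adj N.+1 k s)) (@kg_adj N.+1 k s) f.
Proof.
move=> translateP.
have offsetP (u : KGstab N.+1 k s) : exists a, val u == translate a P.
  by have [a ->] := translateP u; exists a.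
pose c (u : KGstab N.+1 k s) := xchoose (offsetP u).
have c_translate u : val u = translate (c u) P by apply/eqP/(xchooseP (offsetP u)).
have c_sym u v : translate (c u) (val v) = translate (c v) (val u).
  by rewrite (c_translate u) (c_translate v) !translate_comp addrC.
pose f (uv : KGstab N.+1 k s * KGstab N.+1 k s) : KGstab N.+1 k s :=
  Sub (translate (c uv.1) (val uv.2)) (translate_kg_vertex (c uv.1) (valP uv.2)).
exists f => -[u v] -[u' v']; rewrite /box_adj /kg_adj /=.
case/orP => /andP[/eqP <- adj]; first by rewrite disjoint_translate.
by rewrite c_sym (c_sym u') disjoint_translate.
Qed.

Theorem mainTheorem2 (s k : nat) (hs : 2 <= s) (hk : 2 <= k) :
  exists f : KGstab (k * s + 1) k s * KGstab (k * s + 1) k s -> KGstab (k * s + 1) k s,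
    is_hom (box_adj (@kg_adj (k * s + 1) k s) (@kg_adj (k * s + 1) k s))
           (@kg_adj (k * s + 1) k s) f.
Proof.
rewrite addn1; apply: (@translates_square_hom (k * s) k s (progression k s)) => u.
exact: kg_vertex_translate_progression (ltnW hk) (ltnW hs) (valP u).
Qed.
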